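(* There exists a constant $C>0$ such that infinitely many integers $\ell\ge1$ satisfy $$\sum_{i=1}^{\ell-1}i\,q(i)\le C\,\ell\,Q(\ell).$$
   Context: A sign-decorated binary tree is a finite planar rooted tree in which every internal vertex (node) has exactly two ordered children and carries a sign $\oplus$ or $\ominus$; $\mathrm{LIS}(t)$ is the maximal number of leaves in a set of leaves whose pairwise highest common ancestors all carry $\oplus$. Fix $p\in(0,1)$. $T$ is a critical binary Bienaymé–Galton–Watson tree with i.i.d. node signs, $\mathbb P(\oplus)=p$; $q(k)=\mathbb P(\mathrm{LIS}(T)=k)$, $Q(k)=\mathbb P(\mathrm{LIS}(T)\ge k)$. *)

From mathcomp Require Import all_boot all_order all_algebra.
From mathcomp Require Import all_classical all_reals all_analysis.
Set Implicit Arguments. Unset Strict Implicit. Unset Printing Implicit Defensive.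
Import Order.TTheory GRing.Theory Num.Theory numFieldNormedType.Exports.

(* Sign-decorated binary trees: every internal node has two ordered children
   and a sign; [true] stands for (+) and [false] for (-). *)
Inductive stree : Type :=
| Leaf : stree
| Node : bool -> stree -> stree -> stree.

(* Vertices are addressed by paths from the root: [false] = left child,
   [true] = right child. *)
Fixpoint leaves (t : stree) : seq (seq bool) :=
  match t with
  | Leaf => [:: [::]]
  | Node _ l r => map (cons false) (leaves l) ++ map (cons true) (leaves r)
  end.

Fixpoint sign_at (t : stree) (a : seq bool) : option bool :=
  match t, a with
  | Leaf, _ => None
  | Node s _ _, [::] => Some s
  | Node _ l r, b :: a' => sign_at (if b then r else l) a'
  end.

(* highest common ancestor of two vertices = longest common prefix *)
Fixpoint hca (u v : seq bool) : seq bool :=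
  match u, v with
  | x :: u', y :: v' => if x == y then x :: hca u' v' else [::]
  | _, _ => [::]
  end.

Definition plus_set (t : stree) (s : seq (seq bool)) : bool :=
  pairwise (fun u v => sign_at t (hca u v) == Some true) s.

(* LIS(t): maximal number of leaves in such a set (subsets of the leaf set
   are encoded by masks on the list of leaves). *)
Definition LIS (t : stree) : nat :=
  \max_(m : (size (leaves t)).-tuple bool | plus_set t (mask m (leaves t)))
     count id m.

Fixpoint n_internal (t : stree) : nat :=
  match t with
  | Leaf => 0
  | Node _ l r => (n_internal l + n_internal r).+1
  end.

Fixpoint trees_upto (h : nat) : seq stree :=
  match h with
  | 0 => [:: Leaf]
  | h'.+1 =>
      Leaf :: flatten [seq [seq Node s lr.1 lr.2
                              | lr <- [seq (l, r) | l <- trees_upto h',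
                                                    r <- trees_upto h']]
                      | s <- [:: true; false]]
  end.

(* all trees with exactly n internal nodes (their height is <= n) *)
Definition trees_size (n : nat) : seq stree :=
  [seq t <- trees_upto n | n_internal t == n].

Local Open Scope ring_scope.

(* Law of the critical binary Bienayme-Galton-Watson tree with i.i.d. signs,
   P(+) = p: each vertex has 0 or 2 children with probability 1/2 each. *)
Fixpoint bgw_weight (R : realType) (p : R) (t : stree) : R :=
  match t with
  | Leaf => 2^-1
  | Node s l r =>
      2^-1 * (if s then p else 1 - p) * bgw_weight p l * bgw_weight p r
  end.

(* P(T satisfies P), summing over the (a.s. finite) tree by number of
   internal nodes: the limit of the partial sums of the series. *)
Definition bgw_prob (R : realType) (p : R) (P : stree -> bool) : R :=
  limn (series (fun n : nat => \sum_(t <- trees_size n | P t) bgw_weight p t)).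

Definition q (R : realType) (p : R) (k : nat) : R :=
  bgw_prob p (fun t => LIS t == k).
Definition Q (R : realType) (p : R) (k : nat) : R :=
  bgw_prob p (fun t => (k <= LIS t)%N).

(* LIS is additive at (+)-nodes and maximal at (-)-nodes, and LIS(T) >= 1.
   Decomposing T at its root gives, for k >= 2,
     p Q(k) + (1 - p) Q(k)^2 = p \sum_(i < k) q(i) Q(k - i),
   i.e. \sum_(i < l) q(i) (Q(l - i) - Q(l)) = Q(l)^2 / p; in particular Q > 0.
   If Q(2m) <= 2/3 Q(m) for infinitely many m, summing this identity over
   m <= l < 3m bounds \sum_(i < m) i q(i) by (6/p) m Q(m). Otherwise l Q(l)
   grows by a factor 4/3 along l = 2^k M, so it eventually dominates
   \sum_(j < l) Q(j) = \sum_(i < l) i q(i) + (l - 1) Q(l).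
   The probabilities are limits of sums over trees of height <= h, for which
   the root decomposition is a finite identity. *)

From HB Require Import structures.
From mathcomp Require Import all_boot all_order all_algebra.
From mathcomp Require Import all_classical all_reals all_analysis.
From mathcomp Require Import zify ring lra.
Import Order.TTheory GRing.Theory Num.Theory numFieldNormedType.Exports.
Set Implicit Arguments. Unset Strict Implicit. Unset Printing Implicit Defensive.

(** * Enumeration of trees and a recursion for LIS *)

Fixpoint stree_eqb (t u : stree) : bool :=
  match t, u with
  | Leaf, Leaf => true
  | Node s l r, Node s' l' r' => [&& s == s', stree_eqb l l' & stree_eqb r r']
  | _, _ => false
  end.

Lemma stree_eqP : Equality.axiom stree_eqb.
Proof.
elim=> [|s l IHl r IHr] [|s' l' r'] /=; try by constructor.
case: eqP => [<-|ne]; last by constructor=> -[].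
case: IHl => [<-|ne]; last by constructor=> -[].
by case: IHr => [<-|ne]; constructor=> // -[].
Qed.

HB.instance Definition _ := hasDecEq.Build stree stree_eqP.

Fixpoint height (t : stree) : nat :=
  if t is Node _ l r then (maxn (height l) (height r)).+1 else 0.

Definition tree_pairs (h : nat) : seq (stree * stree) :=
  [seq (l, r) | l <- trees_upto h, r <- trees_upto h].

Definition nodes_of (s : bool) (h : nat) : seq stree :=
  [seq Node s lr.1 lr.2 | lr <- tree_pairs h].

Lemma trees_uptoS h : trees_upto h.+1 = Leaf :: nodes_of true h ++ nodes_of false h.
Proof. by rewrite /= cats0. Qed.

Lemma mem_nodes_of s h t :
  (t \in nodes_of s h) =
  if t is Node s' l r then [&& s' == s, l \in trees_upto h & r \in trees_upto h]
  else false.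
Proof.
case: t => [|s' l r]; first by apply/mapP => -[[]].
apply/mapP/and3P => [[[a b] /allpairsP [[? ?] /= [? ? [-> ->]]] [-> -> ->]]//|].
by case=> /eqP -> hl hr; exists (l, r) => //; apply/allpairsP; exists (l, r).
Qed.

Lemma mem_trees_upto h t : (t \in trees_upto h) = (height t <= h)%N.
Proof.
elim: h t => [|h IH] [|s l r] //.
rewrite trees_uptoS inE mem_cat !mem_nodes_of !IH ltnS geq_max.
by case: s; rewrite /= ?orbF.
Qed.

Lemma uniq_trees_upto h : uniq (trees_upto h).
Proof.
elim: h => [//|h IH]; rewrite trees_uptoS /= cat_uniq mem_cat !mem_nodes_of /=.
have Node_inj s : injective (fun lr : stree * stree => Node s lr.1 lr.2).
  by move=> [a b] [c d] [-> ->].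
rewrite !(map_inj_uniq (Node_inj _)) allpairs_uniq //=; last first.
  by move=> [a b] [c d] _ _ [-> ->].
by rewrite andbT; apply/hasPn => _ /mapP [[a b] _ ->]; rewrite mem_nodes_of.
Qed.

Lemma height_le_n_internal t : (height t <= n_internal t)%N.
Proof. by elim: t => [|s l IHl r IHr] //=; rewrite ltnS geq_max; lia. Qed.

Lemma n_internal_lt_exp_height t : (n_internal t < 2 ^ height t)%N.
Proof.
elim: t => [|s l IHl r IHr] //=.
have hl : (2 ^ height l <= 2 ^ maxn (height l) (height r))%N.
  by rewrite leq_exp2l // leq_maxl.
have hr : (2 ^ height r <= 2 ^ maxn (height l) (height r))%N.
  by rewrite leq_exp2l // leq_maxr.
rewrite expnS; lia.
Qed.

Fixpoint lis (t : stree) : nat :=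
  match t with
  | Leaf => 1
  | Node true l r => lis l + lis r
  | Node false l r => maxn (lis l) (lis r)
  end.

Lemma lis_ge1 t : (1 <= lis t)%N.
Proof. by elim: t => [|[] l IHl r IHr] //=; [lia | rewrite leq_max IHl]. Qed.

Lemma allrel_const (c : bool) (a b : seq (seq bool)) :
  allrel (fun _ _ => c) a b = [|| c, nilp a | nilp b].
Proof.
case: c; first exact/allrelP.
by case: a => [|x a]; case: b => [|y b] //=; rewrite allrel0r.
Qed.

Lemma plus_set_Node s l r a b :
  plus_set (Node s l r) (map (cons false) a ++ map (cons true) b) =
  [&& [|| s, nilp a | nilp b], plus_set l a & plus_set r b].
Proof.
rewrite /plus_set pairwise_cat !pairwise_map allrel_mapl allrel_mapr /=.
by rewrite (_ : allrel _ a b = allrel (fun _ _ => s) a b) ?allrel_const //; case: s.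
Qed.

Lemma mask_leaves_Node s l r m1 m2 :
  size m1 = size (leaves l) ->
  mask (m1 ++ m2) (leaves (Node s l r)) =
  map (cons false) (mask m1 (leaves l)) ++ map (cons true) (mask m2 (leaves r)).
Proof. by move=> h1; rewrite /= mask_cat ?size_map // -!map_mask. Qed.

Lemma plus_set_count_le_lis t m :
  size m = size (leaves t) -> plus_set t (mask m (leaves t)) ->
  (count id m <= lis t)%N.
Proof.
elim: t m => [|s l IHl r IHr] m /=; first by case: m => [|[] []].
rewrite size_cat !size_map => hm.
set k := size (leaves l).
have hml : size (take k m) = k by rewrite size_takel // hm leq_addr.
have hmr : size (drop k m) = size (leaves r) by rewrite size_drop; lia.
rewrite -(cat_take_drop k m) (@mask_leaves_Node s l r _ (drop k m) hml).
rewrite plus_set_Node count_cat.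
case/and3P => hs /(IHl _ hml) hcl /(IHr _ hmr) hcr.
case: s hs => /= hs; first lia.
by move: hs; rewrite /nilp !size_mask // => /orP [] /eqP ->; lia.
Qed.

Lemma exists_plus_set_lis t : exists2 m,
  size m = size (leaves t) & plus_set t (mask m (leaves t)) && (count id m == lis t).
Proof.
elim: t => [|s l [ml hsl /andP [hl /eqP hcl]] r [mr hsr /andP [hr /eqP hcr]]].
  by exists [:: true].
have size_cat_leaves m1 m2 : size m1 = size (leaves l) -> size m2 = size (leaves r) ->
    size (m1 ++ m2) = size (leaves (Node s l r)).
  by move=> h1 h2; rewrite size_cat /= size_cat !size_map h1 h2.
case: s size_cat_leaves => [|] size_cat_leaves.
  exists (ml ++ mr); first exact: size_cat_leaves.
  by rewrite (@mask_leaves_Node _ _ _ _ _ hsl) plus_set_Node hl hr count_cat hcl hcr /=.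
have [hlr|hlr] := leqP (lis r) (lis l).
  exists (ml ++ nseq (size (leaves r)) false); first by rewrite size_cat_leaves ?size_nseq.
  rewrite (@mask_leaves_Node _ _ _ _ _ hsl) mask_false plus_set_Node hl orbT /=.
  by rewrite count_cat hcl count_nseq mul0n addn0; apply/eqP; lia.
exists (nseq (size (leaves l)) false ++ mr); first by rewrite size_cat_leaves ?size_nseq.
rewrite mask_leaves_Node ?size_nseq // mask_false plus_set_Node hr /=.
by rewrite count_cat hcr count_nseq mul0n; apply/eqP; lia.
Qed.

Lemma LIS_lis t : LIS t = lis t.
Proof.
apply/eqP; rewrite eqn_leq; apply/andP; split.
  by apply/bigmax_leqP => m hm; apply: plus_set_count_le_lis; rewrite ?size_tuple.
have [m /eqP hsize /andP [hm /eqP <-]] := exists_plus_set_lis t.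
exact: (@leq_bigmax_cond _ _ _ (Tuple hsize)).
Qed.

Local Open Scope ring_scope.

(** * Probabilities as limits over trees of bounded height *)

Lemma ler_sum_subset (R : numDomainType) (I : eqType) (s1 s2 : seq I) (F : I -> R) :
  uniq s1 -> uniq s2 -> {subset s1 <= s2} -> (forall i, 0 <= F i) ->
  \sum_(i <- s1) F i <= \sum_(i <- s2) F i.
Proof.
move=> u1 u2 s12 F0.
rewrite (perm_big [seq i <- s2 | i \in s1]); last first.
  apply: uniq_perm => //; first exact: filter_uniq.
  by move=> i; rewrite mem_filter; case: (boolP (i \in s1)) => // /s12 ->.
by rewrite big_filter big_mkcond /=; apply: ler_sum => i _; case: ifP.
Qed.

Section TreeSums.
Variable R : realType.
Implicit Types F : stree -> R.

Definition height_sum F h := \sum_(t <- trees_upto h) F t.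
Definition size_series F := series (fun n => \sum_(t <- trees_size n) F t).

Lemma height_sumS F h : height_sum F h.+1 =
  F Leaf + \sum_(lr <- tree_pairs h) (F (Node true lr.1 lr.2) + F (Node false lr.1 lr.2)).
Proof. by rewrite /height_sum trees_uptoS big_cons big_cat !big_map big_split. Qed.

Lemma height_sum_mul F G h :
  height_sum F h * height_sum G h = \sum_(lr <- tree_pairs h) F lr.1 * G lr.2.
Proof.
rewrite /height_sum big_allpairs mulr_suml; apply: eq_bigr => l _.
by rewrite mulr_sumr.
Qed.

Lemma size_seriesS F N :
  size_series F N.+1 = \sum_(t <- trees_upto N | (n_internal t <= N)%N) F t.
Proof.
rewrite /size_series /series /=.
transitivity (\sum_(0 <= n < N.+1)
    \sum_(t <- trees_upto N) (if n_internal t == n then F t else 0)).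
  apply: eq_big_nat => n /andP [_ hn]; rewrite -big_mkcond -[RHS]big_filter /trees_size.
  apply: perm_big; apply: uniq_perm; try exact: filter_uniq (uniq_trees_upto _).
  move=> t; rewrite !mem_filter !mem_trees_upto; case: eqP => //= ht.
  by have := height_le_n_internal t; move=> ?; apply/idP/idP; lia.
rewrite exchange_big [RHS]big_mkcond /=; apply: eq_bigr => t _.
by rewrite -big_mkcond (eq_bigl (fun n => n == n_internal t)) ?big_nat1_eq.
Qed.

Section Nonnegative.
Variables (F : stree -> R) (M : R).
Hypothesis F_ge0 : forall t, 0 <= F t.

Lemma size_series_le_height_sum N : size_series F N.+1 <= height_sum F N.
Proof.
by rewrite size_seriesS /height_sum big_mkcond /=; apply: ler_sum => t _; case: ifP.
Qed.

Lemma height_sum_le_size_series h : height_sum F h <= size_series F (2 ^ h).+1.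
Proof.
rewrite size_seriesS -big_filter; apply: ler_sum_subset => //.
- exact: uniq_trees_upto.
- exact: filter_uniq (uniq_trees_upto _).
move=> t; rewrite mem_filter !mem_trees_upto => ht.
have := n_internal_lt_exp_height t.
have : (2 ^ height t <= 2 ^ h)%N by rewrite leq_exp2l.
have : (h < 2 ^ h)%N by exact: ltn_expl.
move=> *; apply/andP; split; lia.
Qed.

Lemma nondecreasing_height_sum : nondecreasing_seq (height_sum F).
Proof.
apply/nondecreasing_seqP => h; apply: ler_sum_subset => //; try exact: uniq_trees_upto.
by move=> t; rewrite !mem_trees_upto => ht; lia.
Qed.

Lemma nondecreasing_size_series : nondecreasing_seq (size_series F).
Proof.
apply/nondecreasing_seqP => n; rewrite /size_series /series /= big_nat_recr //=.
by rewrite lerDl sumr_ge0.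
Qed.

Hypothesis height_sum_le : forall h, height_sum F h <= M.

Lemma cvgn_height_sum : cvgn (height_sum F).
Proof.
apply: nondecreasing_is_cvgn; first exact: nondecreasing_height_sum.
by exists M => _ [h _ <-].
Qed.

Lemma size_series_le n : size_series F n <= height_sum F n.
Proof.
apply: le_trans (size_series_le_height_sum n).
exact: nondecreasing_size_series (leqnSn n).
Qed.

Lemma lim_size_series : limn (size_series F) = limn (height_sum F).
Proof.
have cvg_size : cvgn (size_series F).
  apply: nondecreasing_is_cvgn; first exact: nondecreasing_size_series.
  by exists M => _ [n _ <-]; exact: le_trans (size_series_le n) (height_sum_le n).
apply/eqP; rewrite eq_le; apply/andP; split.
  by apply: ler_lim => //; [exact: cvgn_height_sum | apply: nearW; exact: size_series_le].
apply: limr_le => //; first exact: cvgn_height_sum.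
apply: nearW => h; apply: le_trans (height_sum_le_size_series h) _.
exact: nondecreasing_cvgn_le nondecreasing_size_series cvg_size _.
Qed.

End Nonnegative.
End TreeSums.

Lemma natr_leq_addn (R : pzSemiRingType) (k a b : nat) :
  ((k <= a + b)%N)%:R =
  ((k <= a)%N)%:R + \sum_(0 <= i < k) (a == i)%:R * ((k - i <= b)%N)%:R :> R.
Proof.
have -> : \sum_(0 <= i < k) (a == i)%:R * ((k - i <= b)%N)%:R =
          \sum_(0 <= i < k | i == a) ((k - a <= b)%N)%:R :> R.
  rewrite [RHS]big_mkcond; apply: eq_bigr => i _; rewrite eq_sym.
  by case: eqP => [->|_]; rewrite ?mul1r ?mul0r.
rewrite big_nat1_eq /=; case: leqP => hka.
  by rewrite (leq_trans hka (leq_addr _ _)) addr0.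
by rewrite add0r (_ : (k <= a + b)%N = (k - a <= b)%N) //; apply/idP/idP; lia.
Qed.

Lemma natr_leq_maxn (R : pzRingType) (k a b : nat) :
  ((k <= maxn a b)%N)%:R =
  ((k <= a)%N)%:R + ((k <= b)%N)%:R - ((k <= a)%N)%:R * ((k <= b)%N)%:R :> R.
Proof.
rewrite leq_max; case: (k <= a)%N; case: (k <= b)%N;
  by rewrite /= ?mulr1n ?mulr0n ?mul1r ?mul0r ?addr0 ?add0r ?subr0 ?addrK ?oppr0.
Qed.

Local Open Scope classical_set_scope.

Section BGW.
Variables (R : realType) (p : R).
Hypotheses (p_gt0 : 0 < p) (p_lt1 : p < 1).

Local Notation w := (bgw_weight p).

Lemma bgw_weight_ge0 t : 0 <= w t.
Proof.
elim: t => [|s l IHl r IHr] /=; first by rewrite invr_ge0.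
rewrite !mulr_ge0 ?invr_ge0 //; case: s; rewrite ?subr_ge0; exact: ltW.
Qed.

Lemma height_sum_weightS h :
  height_sum w h.+1 = 2^-1 + 2^-1 * height_sum w h ^+ 2.
Proof.
rewrite height_sumS expr2 height_sum_mul mulr_sumr; congr (_ + _).
by apply: eq_bigr => lr _ /=; ring.
Qed.

Lemma height_sum_weight_le1 h : height_sum w h <= 1.
Proof.
elim: h => [|h IH]; first by rewrite /height_sum big_seq1 invf_le1 ?ler1n.
have h0 : 0 <= height_sum w h by apply: sumr_ge0 => t _; exact: bgw_weight_ge0.
rewrite height_sum_weightS; have : height_sum w h ^+ 2 <= 1 by rewrite expr_le1.
lra.
Qed.

Definition weight_on (b : stree -> bool) t := (b t)%:R * w t.

Lemma weight_on_ge0 b t : 0 <= weight_on b t.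
Proof. exact: mulr_ge0 (bgw_weight_ge0 t). Qed.

Definition prob_upto b h := height_sum (weight_on b) h.
Definition prob b := limn (prob_upto b).

Lemma prob_upto_le1 b h : prob_upto b h <= 1.
Proof.
apply: le_trans (height_sum_weight_le1 h); apply: ler_sum => t _.
by rewrite /weight_on; case: (b t); rewrite ?mul1r ?mul0r ?bgw_weight_ge0.
Qed.

Lemma is_cvg_prob_upto b : cvgn (prob_upto b).
Proof. exact: cvgn_height_sum (weight_on_ge0 b) (prob_upto_le1 b). Qed.

Lemma cvg_prob_upto b : prob_upto b @ \oo --> prob b.
Proof. exact: is_cvg_prob_upto. Qed.

Lemma bgw_probE P : bgw_prob p P = prob P.
Proof.
rewrite /prob -(lim_size_series (weight_on_ge0 P) (prob_upto_le1 P)) /bgw_prob.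
congr (limn (series _)); apply: funext => n; rewrite big_mkcond.
by apply: eq_bigr => t _; rewrite /weight_on; case: (P t); rewrite ?mul1r ?mul0r.
Qed.

Lemma prob_ge0 b : 0 <= prob b.
Proof.
apply: limr_ge; first exact: is_cvg_prob_upto.
by apply: nearW => h; apply: sumr_ge0 => t _; exact: weight_on_ge0.
Qed.

Lemma prob_lim b (u : nat -> R) l :
  (forall h, prob_upto b h.+1 = u h) -> u @ \oo --> l -> prob b = l.
Proof.
move=> hu cvg_u; apply: cvg_lim => //; rewrite -cvg_shiftS.
by rewrite (_ : [sequence _]_n = u) //; apply: funext => h /=; rewrite hu.
Qed.

Definition all_trees : stree -> bool := xpredT.
Definition lis_ge k t := (k <= lis t)%N.
Definition lis_eq i t := lis t == i.

Lemma prob_all_trees : prob all_trees = 1.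
Proof.
have weightE h : prob_upto all_trees h = height_sum w h.
  by apply: eq_bigr => t _; rewrite /weight_on mul1r.
set P := prob all_trees.
have eP : P = 2^-1 + 2^-1 * (P * P).
  apply: (@prob_lim _
    (fun h => 2^-1 + 2^-1 * (prob_upto all_trees h * prob_upto all_trees h))).
    by move=> h; rewrite !weightE height_sum_weightS expr2.
  by apply: cvgD; [exact: cvg_cst | apply: cvgMl_tmp; apply: cvgM; exact: cvg_prob_upto].
have : (P - 1) ^+ 2 = 2 * (2^-1 + 2^-1 * (P * P) - P) by field.
by rewrite -eP subrr mulr0 => /eqP; rewrite sqrf_eq0 subr_eq0 => /eqP.
Qed.

Lemma prob_upto_lis_eq i h :
  prob_upto (lis_eq i) h = prob_upto (lis_ge i) h - prob_upto (lis_ge i.+1) h.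
Proof.
rewrite /prob_upto /height_sum -sumrB; apply: eq_bigr => t _.
rewrite /weight_on /lis_eq /lis_ge -mulrBl; congr (_ * _).
by case: ltngtP => //=; rewrite ?subrr ?subr0.
Qed.

Lemma prob_lis_eq i : prob (lis_eq i) = prob (lis_ge i) - prob (lis_ge i.+1).
Proof.
apply: cvg_lim => //; rewrite (funext (prob_upto_lis_eq i)).
by apply: cvgB; exact: cvg_prob_upto.
Qed.

Lemma prob_upto_lis_geS k h : (2 <= k)%N ->
  prob_upto (lis_ge k) h.+1 =
    p / 2 * (prob_upto (lis_ge k) h * prob_upto all_trees h +
      \sum_(0 <= i < k) prob_upto (lis_eq i) h * prob_upto (lis_ge (k - i)) h)
  + (1 - p) / 2 * (prob_upto (lis_ge k) h * prob_upto all_trees h +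
      prob_upto all_trees h * prob_upto (lis_ge k) h -
      prob_upto (lis_ge k) h * prob_upto (lis_ge k) h).
Proof.
move=> hk; rewrite /prob_upto height_sumS !height_sum_mul.
rewrite {1}/weight_on /lis_ge /= (_ : (k <= 1)%N = false) ?mul0r ?add0r; last lia.
under [X in _ = _ * (_ + X) + _]eq_bigr do rewrite height_sum_mul.
rewrite exchange_big /= -!big_split -sumrB !mulr_sumr -big_split /=.
apply: eq_bigr => -[l r] _ /=; rewrite /weight_on /lis_ge /lis_eq /all_trees /=.
rewrite (eq_bigr (fun i => (lis l == i)%:R * ((k - i <= lis r)%N)%:R * (w l * w r)));
  last by move=> i _; rewrite /weight_on /=; ring.
by rewrite -mulr_suml natr_leq_addn natr_leq_maxn; ring.
Qed.

Lemma prob_lis_ge_rec k : (2 <= k)%N ->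
  p * prob (lis_ge k) + (1 - p) * prob (lis_ge k) ^+ 2 =
  p * \sum_(0 <= i < k) prob (lis_eq i) * prob (lis_ge (k - i)).
Proof.
move=> hk; set P := prob (lis_ge k); set S := \sum_(0 <= i < k) _.
have cvgM2 a b : (fun h => prob_upto a h * prob_upto b h) @ \oo --> prob a * prob b.
  by apply: cvgM; exact: cvg_prob_upto.
have eP : P = p / 2 * (P * prob all_trees + S) +
    (1 - p) / 2 * (P * prob all_trees + prob all_trees * P - P * P).
  apply: prob_lim (fun h => prob_upto_lis_geS h hk) _.
  apply: cvgD; apply: cvgMl_tmp; first apply: cvgD.
  - exact: cvgM2.
  - by apply: cvg_big => //; exact: add_continuous.
  - by apply: cvgB; first apply: cvgD; exact: cvgM2.
rewrite prob_all_trees in eP; apply/eqP; rewrite -subr_eq0.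
have -> : p * P + (1 - p) * P ^+ 2 - p * S =
    2 * (P - (p / 2 * (P * 1 + S) + (1 - p) / 2 * (P * 1 + 1 * P - P * P))) by field.
by rewrite -eP subrr mulr0.
Qed.

End BGW.

(** * Asymptotics of the tail *)

(* [a] grows at least linearly, so eventually [T 0 <= a k], while
   [T k <= T 0 + 4 a k] by induction. *)
Lemma eventually_le_of_growth (R : archiRealFieldType) (T a : nat -> R) :
  0 < a 0 -> (forall k, T k.+1 <= T k + a k) -> (forall k, 4 / 3 * a k <= a k.+1) ->
  exists K, forall k, (K <= k)%N -> T k <= 5 * a k.
Proof.
move=> a0_gt0 T_step a_grow.
have a_lin k : a 0 + k%:R * a 0 / 3 <= a k.
  elim: k => [|k IH]; first by rewrite mul0r mul0r addr0.
  have : 0 <= k%:R * a 0 by rewrite mulr_ge0 // ltW.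
  by have := a_grow k; rewrite -natr1 mulrDl mul1r; lra.
have a_ge0 k : 0 <= a k.
  have : 0 <= k%:R * a 0 by rewrite mulr_ge0 // ltW.
  by have := a_lin k; lra.
have T_le k : T k <= T 0 + 4 * a k.
  elim: k => [|k IH]; first by have := a_ge0 0; lra.
  by have := T_step k; have := a_grow k; have := a_ge0 k; lra.
exists (Num.truncn (3 * T 0 / a 0)).+1 => k hk.
have : 3 * T 0 < k%:R * a 0.
  by rewrite -ltr_pdivrMr //; apply: lt_le_trans (truncnS_gt _) _; rewrite ler_nat.
by have := T_le k; have := a_lin k; lra.
Qed.

Section Analytic.
Variables (R : realType) (p : R) (Q q : nat -> R).
Hypothesis p_gt0 : 0 < p.
Hypothesis qE : forall i, q i = Q i - Q i.+1.
Hypothesis q_ge0 : forall i, 0 <= q i.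
Hypothesis Q_ge0 : forall i, 0 <= Q i.
Hypothesis Q0 : Q 0 = 1.
Hypothesis Q1 : Q 1 = 1.
Hypothesis Q_rec : forall k, (2 <= k)%N ->
  p * Q k + (1 - p) * Q k ^+ 2 = p * \sum_(0 <= i < k) q i * Q (k - i).

Local Notation wsum l := (\sum_(1 <= i < l) i%:R * q i).

Lemma Q_nonincreasing i j : (i <= j)%N -> Q j <= Q i.
Proof.
move=> /subnK <-; elim: (j - i)%N => [|n IH]; first by rewrite add0n.
by apply: le_trans IH; rewrite -subr_ge0 -qE.
Qed.

Lemma sum_q a b : (a <= b)%N -> \sum_(a <= i < b) q i = Q a - Q b.
Proof.
move=> hab; under eq_bigr do rewrite qE -opprB.
by rewrite sumrN telescope_sumr // opprB.
Qed.

Lemma sum_q_shift_defect l : (2 <= l)%N ->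
  \sum_(0 <= i < l) q i * (Q (l - i) - Q l) = Q l ^+ 2 / p.
Proof.
move=> hl; under eq_bigr do rewrite mulrBr.
rewrite sumrB -mulr_suml sum_q // Q0.
have -> : \sum_(0 <= i < l) q i * Q (l - i) = (p * Q l + (1 - p) * Q l ^+ 2) / p.
  by rewrite Q_rec // mulrC mulKf // gt_eqF.
by field; rewrite gt_eqF.
Qed.

Lemma Q_double_eq0 m : (1 <= m)%N -> Q (2 * m) = 0 -> Q m = 0.
Proof.
move=> hm Q2m0; have := @sum_q_shift_defect (2 * m) ltac:(lia).
rewrite Q2m0 expr0n /= mul0r; under eq_bigr do rewrite subr0.
rewrite (big_cat_nat _ (n := m)) //=; last lia.
have low_ge0 : 0 <= \sum_(0 <= i < m) q i * Q (2 * m - i).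
  by apply: sumr_ge0 => i _; apply: mulr_ge0.
have high_ge : (Q m - Q (2 * m)) * Q m <= \sum_(m <= i < 2 * m) q i * Q (2 * m - i).
  rewrite -sum_q; last lia.
  rewrite mulr_suml; apply: ler_sum_nat => i /andP [hmi hi].
  by apply: ler_wpM2l => //; apply: Q_nonincreasing; lia.
rewrite Q2m0 subr0 in high_ge => sum0.
apply/eqP; rewrite -sqrf_eq0 eq_le sqr_ge0 andbT expr2; lra.
Qed.

Lemma Q_gt0 m : (1 <= m)%N -> 0 < Q m.
Proof.
elim/ltn_ind: m => m IH hm.
have [->|m_gt1] := eqVneq m 1%N; first by rewrite Q1 ltr01.
set h := (m.+1 %/ 2)%N.
have Qh_gt0 : 0 < Q h by apply: IH; lia.
apply: lt_le_trans (Q_nonincreasing (_ : m <= 2 * h)%N); last lia.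
rewrite lt_def Q_ge0 andbT; apply: contraTneq Qh_gt0 => /Q_double_eq0 -> //.
  by rewrite ltxx.
lia.
Qed.

Lemma sum_Q_shift_ge m i : (1 <= m)%N -> (i <= m)%N ->
  i%:R * (Q m - Q (2 * m)) <= \sum_(m <= l < 3 * m) (Q (l - i) - Q l).
Proof.
move=> hm; elim: i => [|i IH] hi.
  by rewrite mul0r big1 // => l _; rewrite subn0 subrr.
have -> : \sum_(m <= l < 3 * m) (Q (l - i.+1) - Q l) =
    \sum_(m <= l < 3 * m) (Q (l - i) - Q l) +
    \sum_(m <= l < 3 * m) (- Q (l.+1 - i.+1) - - Q (l - i.+1)).
  by rewrite -big_split /=; apply: eq_bigr => l _; rewrite subSS; ring.
rewrite (telescope_sumr (fun k => - Q (k - i.+1))) /=; last lia.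
have := IH ltac:(lia); rewrite -natr1.
have : Q m <= Q (m - i.+1) by apply: Q_nonincreasing; lia.
have : Q (3 * m - i.+1) <= Q (2 * m) by apply: Q_nonincreasing; lia.
lra.
Qed.

(* Sum the identity [sum_q_shift_defect] over [m <= l < 3m] and keep only the
   terms [i < m]. *)
Lemma wsum_mul_drop_le m : (2 <= m)%N ->
  wsum m * (Q m - Q (2 * m)) <= 2 * m%:R * Q m ^+ 2 / p.
Proof.
move=> hm.
have defect_le : \sum_(m <= l < 3 * m) \sum_(0 <= i < l) q i * (Q (l - i) - Q l)
    <= 2 * m%:R * Q m ^+ 2 / p.
  rewrite (eq_big_nat _ _ (F2 := fun l => Q l ^+ 2 / p)); last first.
    by move=> l /andP [hl _]; apply: sum_q_shift_defect; lia.
  apply: le_trans (ler_sum_nat (G := fun _ => Q m ^+ 2 / p) _) _.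
    move=> l /andP [hl _]; apply: ler_wpM2r; first by rewrite invr_ge0 ltW.
    by rewrite !expr2; apply: ler_pM => //; apply: Q_nonincreasing.
  rewrite sumr_const_nat (_ : (3 * m - m = 2 * m)%N); last lia.
  by rewrite -[X in X <= _]mulr_natr natrM le_eqVlt; apply/orP; left; apply/eqP; ring.
have truncate : \sum_(m <= l < 3 * m) \sum_(0 <= i < m) q i * (Q (l - i) - Q l)
    <= \sum_(m <= l < 3 * m) \sum_(0 <= i < l) q i * (Q (l - i) - Q l).
  apply: ler_sum_nat => l /andP [hl _]; rewrite [X in _ <= X](big_cat_nat _ (n := m)) //=.
  rewrite lerDl; apply: sumr_ge0 => i _; apply: mulr_ge0 => //.
  by rewrite subr_ge0; apply: Q_nonincreasing; lia.
have shift_ge : \sum_(0 <= i < m) q i * (i%:R * (Q m - Q (2 * m))) <=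
    \sum_(m <= l < 3 * m) \sum_(0 <= i < m) q i * (Q (l - i) - Q l).
  rewrite exchange_big /=; apply: ler_sum_nat => i /andP [_ hi].
  by rewrite -mulr_sumr; apply: ler_wpM2l => //; apply: sum_Q_shift_ge; lia.
have -> : wsum m * (Q m - Q (2 * m)) =
    \sum_(0 <= i < m) q i * (i%:R * (Q m - Q (2 * m))).
  rewrite (big_ltn (_ : 0 < m)%N) ?mul0r ?mulr0 ?add0r ?mulr_suml; last lia.
  by apply: eq_bigr => i _; ring.
by apply: le_trans shift_ge _; apply: le_trans truncate _.
Qed.

Lemma wsum_le_of_drop m : (2 <= m)%N -> Q (2 * m) <= 2 / 3 * Q m ->
  wsum m <= 6 / p * m%:R * Q m.
Proof.
move=> hm drop.
have Qm_gt0 : 0 < Q m / 3 by rewrite divr_gt0 // Q_gt0 //; lia.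
have wsum_ge0 : 0 <= wsum m by apply: sumr_ge0 => i _; apply: mulr_ge0.
rewrite -(ler_pM2r Qm_gt0).
apply: le_trans (_ : _ <= wsum m * (Q m - Q (2 * m))) _.
  by apply: ler_wpM2l => //; lra.
apply: le_trans (wsum_mul_drop_le hm) _.
by rewrite le_eqVlt; apply/orP; left; apply/eqP; field; rewrite gt_eqF.
Qed.

Lemma wsumE l : (1 <= l)%N -> wsum l = \sum_(1 <= j < l) Q j - l.-1%:R * Q l.
Proof.
elim: l => [//|l IH] hl.
have [->|l_gt0] := eqVneq l 0%N; first by rewrite !big_geq // mul0r subr0.
rewrite big_nat_recr /=; last lia.
rewrite [X in _ = X - _]big_nat_recr /=; last lia.
rewrite IH; last lia.
by rewrite qE; case: l IH hl l_gt0 => // l _ _ _ /=; rewrite -natr1; ring.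
Qed.

Lemma wsum_le_of_no_drop M0 : (1 <= M0)%N ->
  (forall m, (M0 <= m)%N -> 2 / 3 * Q m < Q (2 * m)) ->
  forall N, exists l, [/\ (N < l)%N, (1 <= l)%N & wsum l <= 5 * l%:R * Q l].
Proof.
move=> M0_gt0 no_drop N.
pose L k := (2 ^ k * M0)%N.
have L_ge k : (M0 <= L k)%N by rewrite leq_pmull // expn_gt0.
have LS k : L k.+1 = (2 * L k)%N by rewrite /L expnS mulnA.
pose T k := \sum_(1 <= j < L k) Q j.
pose a k := (L k)%:R * Q (L k).
have [K T_le] : exists K, forall k, (K <= k)%N -> T k <= 5 * a k.
  apply: eventually_le_of_growth => [|k|k].
  - by rewrite mulr_gt0 ?ltr0n ?Q_gt0 //; have := L_ge 0; lia.
  - have := L_ge k => hk.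
    rewrite /T LS (big_cat_nat _ (n := L k)) /=; [|lia|lia].
    rewrite lerD2l; apply: le_trans (ler_sum_nat (G := fun _ => Q (L k)) _) _.
      by move=> j /andP [hj _]; apply: Q_nonincreasing.
    rewrite sumr_const_nat (_ : (2 * L k - L k = L k)%N); last lia.
    by rewrite /a mulr_natl.
  - have := no_drop _ (L_ge k); rewrite /a LS natrM => /ltW grow.
    have := ler_wpM2l (ler0n _ (L k)) grow; lra.
pose k := maxn K N.
have Lk_gt : (k < L k)%N.
  by apply: leq_trans (ltn_expl k (isT : 1 < 2)%N) _; rewrite leq_pmulr.
exists (L k); split; [lia | lia |].
rewrite wsumE; last lia.
have : 0 <= (L k).-1%:R * Q (L k) by apply: mulr_ge0.
have := T_le k (leq_maxl _ _); rewrite /T /a -mulrA; lra.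
Qed.

Lemma wsum_le_infinitely_often : exists C : R, 0 < C /\
  forall N, exists l, (N < l)%N /\ (1 <= l)%N /\ wsum l <= C * l%:R * Q l.
Proof.
have c_gt0 : 0 < 6 / p by rewrite divr_gt0.
exists (6 / p + 5); split; first lra.
have le_C c l : c <= 6 / p + 5 -> c * l%:R * Q l <= (6 / p + 5) * l%:R * Q l.
  by move=> hc; rewrite -!mulrA ler_wpM2r // mulr_ge0.
have [drop_often|drop_rarely] :=
  pselect (forall M, exists m, (M <= m)%N /\ Q (2 * m) <= 2 / 3 * Q m).
  move=> N; have [m [hm drop]] := drop_often N.+2; exists m; do 2?split; try lia.
  by apply: le_trans (wsum_le_of_drop _ drop) (le_C _ _ _); [lia | lra].
have [M0 no_drop] : exists M0, forall m, (M0 <= m)%N -> 2 / 3 * Q m < Q (2 * m).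
  move/existsNP: drop_rarely => [M0 hM0]; exists M0 => m hm.
  by rewrite ltNge; apply/negP => drop; apply: hM0; exists m.
move=> N; have [|m hm|l [hN hl le5]] := @wsum_le_of_no_drop (maxn M0 1) _ _ N.
- exact: leq_maxr.
- by apply: no_drop; lia.
by exists l; do 2?split => //; apply: le_trans le5 (le_C _ _ _); lra.
Qed.

End Analytic.

Theorem lemma6p5 (R : realType) (p : R) (hp0 : 0 < p) (hp1 : p < 1) :
  exists C : R, 0 < C /\
    forall N : nat, exists l : nat, (N < l)%N /\ (1 <= l)%N /\
      \sum_(1 <= i < l) (i%:R * q p i) <= C * l%:R * Q p l.
Proof.
have QE k : Q p k = prob p (lis_ge k).
  by rewrite /Q bgw_probE //; congr prob; apply: funext => t; rewrite LIS_lis.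
have qE i : q p i = prob p (lis_eq i).
  by rewrite /q bgw_probE //; congr prob; apply: funext => t; rewrite LIS_lis.
have Q_all k : (k <= 1)%N -> Q p k = 1.
  move=> hk; rewrite QE -(prob_all_trees hp0 hp1); congr prob.
  by apply: funext => t; rewrite /lis_ge (leq_trans hk (lis_ge1 t)).
apply: (wsum_le_infinitely_often hp0) => [i|i|i|||k hk].
- by rewrite qE !QE prob_lis_eq.
- by rewrite qE prob_ge0.
- by rewrite QE prob_ge0.
- exact: Q_all.
- exact: Q_all.
under eq_bigr do rewrite qE QE.
by rewrite QE prob_lis_ge_rec.
Qed.
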